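(* Let $\mathcal{B}$ be a $\sigma$-algebra on a nonempty set $E$ and let $\nu,\tau$ be $\sigma$-maxitive measures on $\mathcal{B}$, with $\tau$ $\sigma$-principal. Then $\nu\ll\tau$ if and only if $\nu\lll\tau$. In this situation, the relative density of $\nu$ with respect to $\tau$ is unique $\tau$-almost everywhere.
   Context: A $\sigma$-maxitive measure on $\mathcal{B}$ is a map $\nu:\mathcal{B}\to[0,\infty]$ with $\nu(\emptyset)=0$, $\nu(B\cup B')=\max(\nu(B),\nu(B'))$, and $\nu(\bigcup_nB_n)=\lim_n\nu(B_n)$ for nondecreasing sequences in $\mathcal{B}$. A subset $N\subset E$ is $\tau$-negligible if $N\subset G$ for some $G\in\mathcal{B}$ with $\tau(G)=0$; a property holds $\tau$-almost everywhere if it holds outside a $\tau$-negligible set. A $\sigma$-ideal of $\mathcal{B}$ is a nonempty $\mathcal{I}\subset\mathcal{B}$ closed under countable unions and such that $B\subset I\in\mathcal{I}$, $B\in\mathcal{B}$ imply $B\in\mathcal{I}$. $\tau$ is $\sigma$-principal if for every $\sigma$-ideal $\mathcal{I}$ of $\mathcal{B}$ there is $L\in\mathcal{I}$ such that $S\setminus L$ is $\tau$-negligible for all $S\in\mathcal{I}$. A map $f:E\to[0,\infty]$ is $\mathcal{B}$-measurable if $\{f>t\}\in\mathcal{B}$ for all $t\geq0$; its $\tau$-essential supremum on $B$ is $\bigoplus^{\tau}_{x\in B}f(x)=\inf\{t>0:B\cap\{f>t\}\text{ is }\tau\text{-negligible}\}$. We write $\nu\ll\tau$ if $\tau(B)=0\Rightarrow\nu(B)=0$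 for all $B\in\mathcal{B}$, and $\nu\lll\tau$ if there is a $\mathcal{B}$-measurable $f$ (a relative density of $\nu$ w.r.t. $\tau$) with $\nu(B)=\bigoplus^{\tau}_{x\in B}f(x)$ for all $B\in\mathcal{B}$. *)

From HB Require Import structures.
From mathcomp Require Import all_boot all_order all_algebra.
From mathcomp Require Import all_classical all_reals ereal topology normedtype sequences measure.
Set Implicit Arguments. Unset Strict Implicit. Unset Printing Implicit Defensive.
Import Order.TTheory GRing.Theory Num.Theory.
Local Open Scope classical_set_scope.
Local Open Scope ring_scope.
Local Open Scope ereal_scope.

(* The sigma-algebra B on E is the sigma-algebra [measurable] of a
   measurableType T; maps on B are represented by maps on [set T] whose
   properties are only required on measurable sets. *)

Section Defs.
Context {d : measure_display} {T : measurableType d} {R : realType}.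

Definition sigma_maxitive (nu : set T -> \bar R) : Prop :=
  [/\ nu set0 = 0,
      (forall B, measurable B -> 0 <= nu B),
      (forall B B', measurable B -> measurable B' ->
          nu (B `|` B') = maxe (nu B) (nu B')) &
      (forall Bn : nat -> set T, (forall n, measurable (Bn n)) ->
          {homo Bn : n m / (n <= m)%N >-> n `<=` m} ->
          (nu \o Bn) @ \oo --> nu (\bigcup_n Bn n))].

Definition tau_negligible (tau : set T -> \bar R) (N : set T) : Prop :=
  exists G, [/\ measurable G, N `<=` G & tau G = 0].

Definition sigma_ideal (I : set (set T)) : Prop :=
  [/\ I !=set0,
      I `<=` measurable,
      (forall Bn : nat -> set T, (forall n, I (Bn n)) -> I (\bigcup_n Bn n)) &
      (forall B C, measurable B -> B `<=` C -> I C -> I B)].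

Definition sigma_principal (tau : set T -> \bar R) : Prop :=
  forall I, sigma_ideal I ->
    exists2 L, I L & forall S, I S -> tau_negligible tau (S `\` L).

Definition Bmeasurable (f : T -> \bar R) : Prop :=
  (forall x, 0 <= f x) /\
  (forall t : R, (0 <= t)%R -> measurable [set x | (t%:E < f x)]).

Definition ess_sup_on (tau : set T -> \bar R) (f : T -> \bar R) (B : set T)
    : \bar R :=
  ereal_inf [set t%:E | t in [set t : R |
     (0 < t)%R /\ tau_negligible tau (B `&` [set x | t%:E < f x])]].

Definition abs_cont (nu tau : set T -> \bar R) : Prop :=
  forall B, measurable B -> tau B = 0 -> nu B = 0.

Definition rel_density (nu tau : set T -> \bar R) (f : T -> \bar R) : Prop :=
  Bmeasurable f /\ forall B, measurable B -> nu B = ess_sup_on tau f B.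

Definition strong_abs_cont (nu tau : set T -> \bar R) : Prop :=
  exists f, rel_density nu tau f.

End Defs.

From HB Require Import structures.
From mathcomp Require Import all_boot all_order all_algebra.
From mathcomp Require Import all_classical all_reals ereal topology normedtype sequences measure.
From mathcomp Require Import lra.
Set Implicit Arguments. Unset Strict Implicit. Unset Printing Implicit Defensive.
Import Order.TTheory GRing.Theory Num.Theory.
Local Open Scope classical_set_scope.
Local Open Scope ring_scope.
Local Open Scope ereal_scope.

(* For the nontrivial direction: for each rational level q, the sets of nu-measure at most |q|
   form a sigma-ideal, and sigma-principality of tau provides an essentially
   largest member L_q.  The candidate density is f(x) = inf {|q| : x \in L_q};
   absolute continuity nu << tau controls the part of B where f is large, and
   maximality of L_q controls the rest.  Uniqueness: for two densities f, g
   and every level c, the set {f <= c < g} has nu-measure at most c, hence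
   the essential supremum of g on it is at most c, so it is tau-negligible;
   a countable union over rational levels covers {f <> g}. *)

Lemma bigcup_rat_unpickle {T : Type} (A : rat -> set T) :
  \bigcup_r A r = \bigcup_n (if unpickle n is Some r then A r else set0).
Proof.
apply/seteqP; split => x.
  by move=> [r _ Arx]; exists (pickle r) => //; rewrite pickleK.
by move=> [n _]; case: (unpickle n) => // r Arx; exists r.
Qed.

Lemma exists_lte_add_invS {R : realType} (c : R) (y : \bar R) : c%:E < y ->
  exists n : nat, (c + n.+1%:R^-1)%:E < y.
Proof.
case: y => [y||] //.
- by rewrite lte_fin => /ltr_add_invr [k hk]; exists k; rewrite lte_fin.
- by move=> _; exists 0%N; exact: ltry.
Qed.

Lemma ereal_rat_between {R : realType} (a b : \bar R) : 0 <= a -> a < b ->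
  exists q : rat, a <= `|ratr q|%:E /\ `|ratr q|%:E < b.
Proof.
case: a => [a| |] a0 ab; last by rewrite leNgt ltNyr in a0.
  have {}a0 : (0 <= a)%R by rewrite -lee_fin.
  have [b' ab' b'b] : exists2 b' : R, (a < b')%R & b'%:E <= b.
    case: b ab => [b| |] ab //; first by exists b; rewrite -?lte_fin.
    by exists (a + 1)%R; [lra | rewrite leey].
  have [q] := rat_in_itvoo ab'; rewrite in_itv /= => /andP[aq qb'].
  exists q; rewrite gtr0_norm; last exact: le_lt_trans aq.
  by split; [rewrite lee_fin ltW | apply: lt_le_trans b'b; rewrite lte_fin].
by rewrite ltNge leey in ab.
Qed.

Section sigma_maxitive.
Context {d : measure_display} {T : measurableType d} {R : realType}.
Variable nu : set T -> \bar R.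
Hypothesis hnu : sigma_maxitive nu.

Lemma sigma_maxitive_le (A B : set T) : measurable A -> measurable B ->
  A `<=` B -> nu A <= nu B.
Proof.
move: hnu => [_ _ numax _] mA mB AB.
by rewrite -(setUidr AB) numax // le_max lexx.
Qed.

Lemma sigma_maxitive_bigcup_le (A : nat -> set T) (c : \bar R) :
  (forall n, measurable (A n)) -> (forall n, nu (A n) <= c) ->
  nu (\bigcup_n A n) <= c.
Proof.
move: hnu => [_ _ numax nucvg] mA Ac.
pose B n := \big[setU/set0]_(i < n.+1) A i.
have mB n : measurable (B n) by apply: bigsetU_measurable.
have B_nd : {homo B : n m / (n <= m)%N >-> n `<=` m}.
  move=> n m nm x; rewrite /B -!bigcup_mkord => -[i /= ilt Aix].
  by exists i => //=; exact: leq_trans ilt _.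
have Bc n : nu (B n) <= c.
  elim: n => [|n ih]; rewrite /B big_ord_recr /=.
    by rewrite big_ord0 set0U.
  by rewrite numax ?ge_max ?ih ?Ac //; apply: bigsetU_measurable.
have nuB := nucvg _ mB B_nd.
rewrite -bigcup_bigsetU_bigcup -(cvg_lim _ nuB) //.
apply: lime_le; first by apply/cvg_ex; eexists; exact: nuB.
exact: nearW.
Qed.

Lemma sigma_maxitive_bigcup_rat_le (A : rat -> set T) (c : \bar R) :
  (forall r, measurable (A r)) -> (forall r, nu (A r) <= c) ->
  nu (\bigcup_r A r) <= c.
Proof.
move=> mA Ac; rewrite bigcup_rat_unpickle.
apply: sigma_maxitive_bigcup_le => n; case: (unpickle n) => [r|] //.
have [-> nu_ge0 _ _] := hnu.
exact: le_trans (nu_ge0 _ (mA 0%Q)) (Ac 0%Q).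
Qed.

End sigma_maxitive.

Section negligible.
Context {d : measure_display} {T : measurableType d} {R : realType}.
Variable tau : set T -> \bar R.

Lemma negligible_subset (N N' : set T) : N `<=` N' ->
  tau_negligible tau N' -> tau_negligible tau N.
Proof. by move=> NN' [G [mG N'G tG]]; exists G; split => //; exact: subset_trans N'G. Qed.

Hypothesis htau : sigma_maxitive tau.

Lemma negligible_setU (N N' : set T) :
  tau_negligible tau N -> tau_negligible tau N' -> tau_negligible tau (N `|` N').
Proof.
move=> [G [mG NG tG]] [G' [mG' NG' tG']]; exists (G `|` G').
have [_ _ taumax _] := htau.
by split; [exact: measurableU | exact: setUSS | rewrite taumax // tG tG' maxxx].
Qed.

Lemma negligible_bigcup (N : nat -> set T) :
  (forall n, tau_negligible tau (N n)) -> tau_negligible tau (\bigcup_n N n).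
Proof.
move=> /choice[G hG]; have mG n : measurable (G n) by case: (hG n).
exists (\bigcup_n G n); split; first exact: bigcupT_measurable.
  by move=> x [n _ Nx]; exists n => //; case: (hG n) => _ + _; apply.
have [_ tau_ge0 _ _] := htau.
apply/eqP; rewrite eq_le tau_ge0 ?andbT; last exact: bigcupT_measurable.
by apply: sigma_maxitive_bigcup_le => // n; case: (hG n) => _ _ ->.
Qed.

Lemma negligible_bigcup_rat (N : rat -> set T) :
  (forall r, tau_negligible tau (N r)) -> tau_negligible tau (\bigcup_r N r).
Proof.
move=> hN; rewrite bigcup_rat_unpickle; apply: negligible_bigcup => n.
case: (unpickle n) => [r|]; first exact: hN.
by exists set0; split => //; have [] := htau.
Qed.

End negligible.

Section ess_sup_on.
Context {d : measure_display} {T : measurableType d} {R : realType}.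
Variables (tau : set T -> \bar R) (f : T -> \bar R) (B : set T).

Lemma ess_sup_on_ge0 : 0 <= ess_sup_on tau f B.
Proof. by apply: le_ereal_inf_tmp => _ [s [s0 _] <-]; rewrite lee_fin ltW. Qed.

Lemma ess_sup_on_le (c : R) : (0 <= c)%R ->
  (forall t : R, (c < t)%R -> tau_negligible tau (B `&` [set x | t%:E < f x])) ->
  ess_sup_on tau f B <= c%:E.
Proof.
move=> c0 hc; apply/lee_addgt0Pr => e e0; rewrite -EFinD.
by apply: ereal_inf_lbound; exists (c + e)%R => //; split; [lra | apply: hc; lra].
Qed.

Lemma ess_sup_on_le_negligible (c : R) : ess_sup_on tau f B <= c%:E ->
  forall t : R, (c < t)%R -> tau_negligible tau (B `&` [set x | t%:E < f x]).
Proof.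
move=> esc t ct.
have : ess_sup_on tau f B < t%:E by apply: le_lt_trans esc _; rewrite lte_fin.
move/ereal_inf_lt => [_ [s [s0 hs]] <-]; rewrite lte_fin => st.
apply: negligible_subset hs => x [Bx tfx]; split => //.
by apply: lt_trans tfx; rewrite lte_fin.
Qed.

End ess_sup_on.

Section density_unique.
Context {d : measure_display} {T : measurableType d} {R : realType}.
Variables nu tau : set T -> \bar R.
Hypothesis htau : sigma_maxitive tau.

Lemma density_level_negligible (f g : T -> \bar R) (c : R) :
  rel_density nu tau f -> rel_density nu tau g -> (0 <= c)%R ->
  tau_negligible tau ([set x | c%:E < g x] `&` ~` [set x | c%:E < f x]).
Proof.
move=> [[_ mf] nuf] [[_ mg] nug] c0; set S := _ `&` _.
have mS : measurable S by apply: measurableI; [exact: mg | exact/measurableC/mf].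
have : nu S <= c%:E.
  rewrite nuf //; apply: ess_sup_on_le => // t ct; exists set0.
  split => //; last by have [] := htau.
  by move=> x [[_ nfx] tfx]; apply: nfx; apply: lt_trans tfx; rewrite lte_fin.
rewrite nug // => /ess_sup_on_le_negligible gS.
have -> : S = \bigcup_n (S `&` [set x | (c + n.+1%:R^-1)%:E < g x]).
  apply/seteqP; split => x; last by move=> [n _ []].
  by move=> Sx; have [n hn] := exists_lte_add_invS Sx.1; exists n.
by apply: negligible_bigcup => // n; apply: gS; rewrite ltrDl invr_gt0.
Qed.

Lemma density_lt_negligible (f g : T -> \bar R) :
  rel_density nu tau f -> rel_density nu tau g ->
  tau_negligible tau [set x | f x < g x].
Proof.
move=> hf hg.
pose A q := [set x | `|ratr q|%:E < g x] `&` ~` [set x | `|ratr q|%:E < f x].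
apply: (@negligible_subset _ _ _ _ _ (\bigcup_q A q)).
  move=> x fg; have [q [fq qg]] := ereal_rat_between (hf.1.1 x) fg.
  by exists q => //; split => //=; apply/negP; rewrite -leNgt.
apply: negligible_bigcup_rat => // q.
exact: density_level_negligible hf hg _.
Qed.

Lemma rel_density_unique (f g : T -> \bar R) :
  rel_density nu tau f -> rel_density nu tau g ->
  tau_negligible tau [set x | f x <> g x].
Proof.
move=> hf hg.
apply: (@negligible_subset _ _ _ _ _ ([set x | f x < g x] `|` [set x | g x < f x])).
  by move=> x /eqP; rewrite neq_lt => /orP[]; [left | right].
apply: negligible_setU => //.
- exact: density_lt_negligible hf hg.
- exact: density_lt_negligible hg hf.
Qed.

End density_unique.

Lemma strong_abs_cont_abs_cont {d : measure_display} {T : measurableType d}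
    {R : realType} (nu tau : set T -> \bar R) :
  sigma_maxitive nu -> strong_abs_cont nu tau -> abs_cont nu tau.
Proof.
move=> [_ nu_ge0 _ _] [f [_ nuf]] B mB tB.
apply/eqP; rewrite eq_le nu_ge0 // andbT nuf //.
by apply: ess_sup_on_le => // t _; exists B; split => //; exact: subIsetl.
Qed.

Section density_exists.
Context {d : measure_display} {T : measurableType d} {R : realType}.
Variables nu tau : set T -> \bar R.
Hypothesis hnu : sigma_maxitive nu.

Definition sublevel_ideal (q : rat) : set (set T) :=
  [set B | measurable B /\ nu B <= `|ratr q|%:E].

Lemma sigma_ideal_sublevel q : sigma_ideal (sublevel_ideal q).
Proof.
have [nu0 _ _ _] := hnu; split.
- by exists set0; split => //; rewrite nu0 lee_fin normr_ge0.
- by move=> B [].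
- move=> Bn hB; split; first by apply: bigcupT_measurable => n; case: (hB n).
  by apply: sigma_maxitive_bigcup_le => // n; case: (hB n).
- move=> B C mB BC [mC nuC]; split => //.
  exact: le_trans (sigma_maxitive_le hnu mB mC BC) nuC.
Qed.

Variable L : rat -> set T.
Hypothesis L_ideal : forall q, sublevel_ideal q (L q).
Hypothesis L_max : forall q S, sublevel_ideal q S -> tau_negligible tau (S `\` L q).

Definition level_density (x : T) : \bar R :=
  ereal_inf [set `|ratr q|%:E | q in [set q | L q x]].

Let mL q : measurable (L q). Proof. by case: (L_ideal q). Qed.

Lemma level_density_ge0 x : 0 <= level_density x.
Proof. by apply: le_ereal_inf_tmp => _ [q _ <-]; rewrite lee_fin normr_ge0. Qed.

Lemma level_density_le q x : L q x -> level_density x <= `|ratr q|%:E.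
Proof. by move=> Lqx; apply: ereal_inf_lbound; exists q. Qed.

Lemma measurable_level_density_gt (t : R) :
  measurable [set x | t%:E < level_density x].
Proof.
pose P (n : nat) := [set q : rat | (`|ratr q| < t + n.+1%:R^-1)%R].
have -> : [set x | t%:E < level_density x] = \bigcup_n ~` \bigcup_(q in P n) L q.
  apply/seteqP; split => x.
    move=> /exists_lte_add_invS[n hn]; exists n => // -[q Pq Lqx].
    have := lt_le_trans hn (level_density_le Lqx); rewrite lte_fin => qt.
    by move: Pq; rewrite /P /= ltNge (ltW qt).
  move=> [n _ notL]; apply: (@lt_le_trans _ _ (t + n.+1%:R^-1)%:E).
    by rewrite lte_fin ltrDl invr_gt0.
  apply: le_ereal_inf_tmp => _ [q Lqx <-]; rewrite lee_fin leNgt.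
  by apply/negP => Pq; apply: notL; exists q.
apply: bigcupT_measurable => n; apply: measurableC.
by rewrite bigcup_mkcond; apply: bigcupT_measurable_rat => q; case: ifP.
Qed.

Lemma Bmeasurable_level_density : Bmeasurable level_density.
Proof.
split; [exact: level_density_ge0 | move=> t _; exact: measurable_level_density_gt].
Qed.

Lemma ess_sup_level_density_le B : measurable B ->
  ess_sup_on tau level_density B <= nu B.
Proof.
move=> mB; have [_ nu_ge0 _ _] := hnu; have := nu_ge0 B mB.
case nuB: (nu B) => [c| |] // c0; last by rewrite leey.
apply: ess_sup_on_le; first by rewrite -lee_fin.
move=> t ct; have [q] := rat_in_itvoo ct; rewrite in_itv /= => /andP[cq qt].
have q0 : (0 < ratr q :> R)%R by apply: le_lt_trans cq; rewrite -lee_fin.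
have Bq : sublevel_ideal q B by split => //; rewrite nuB lee_fin gtr0_norm // ltW.
apply: negligible_subset (L_max Bq) => x [Bx tfx]; split => // Lqx.
have := lt_le_trans tfx (level_density_le Lqx).
by rewrite gtr0_norm // lte_fin => /(lt_trans qt); rewrite ltxx.
Qed.

(* Off the set where the density exceeds t, every point lies in some L q
   with |q| < s. *)
Lemma nu_level_density_le B (t s : R) : measurable B -> (0 <= t)%R -> (t < s)%R ->
  nu (B `\` [set x | t%:E < level_density x]) <= s%:E.
Proof.
move=> mB t0 ts; have [nu0 _ _ _] := hnu.
pose Q := [set q : rat | (`|ratr q| < s)%R].
have mD : measurable (B `\` [set x | t%:E < level_density x]).
  exact/measurableD/measurable_level_density_gt.
apply: (@le_trans _ _ (nu (\bigcup_q (if q \in Q then L q else set0)))).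
  apply: sigma_maxitive_le => //; first by apply: bigcupT_measurable_rat => q; case: ifP.
  move=> x [Bx /negP]; rewrite -leNgt => ft.
  have : level_density x < s%:E by apply: le_lt_trans ft _; rewrite lte_fin.
  move/ereal_inf_lt => [_ [q Lqx <-]]; rewrite lte_fin => qs.
  by exists q => //; rewrite (mem_set (qs : Q q)).
apply: sigma_maxitive_bigcup_rat_le => //; first by move=> q; case: ifP.
move=> q; case: ifPn => [/set_mem Qq|_]; last by rewrite nu0 lee_fin; lra.
by apply: le_trans (L_ideal q).2 _; rewrite lee_fin ltW.
Qed.

Hypothesis hac : abs_cont nu tau.

Lemma le_ess_sup_level_density B : measurable B ->
  nu B <= ess_sup_on tau level_density B.
Proof.
move=> mB; have [_ _ numax _] := hnu; have := ess_sup_on_ge0 tau level_density B.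
case es: (ess_sup_on _ _ _) => [c| |] // c0; last by rewrite leey.
have {}c0 : (0 <= c)%R by rewrite -lee_fin.
apply/lee_addgt0Pr => e e0; rewrite -EFinD.
pose t := (c + e / 2)%R; set S := [set x | t%:E < level_density x].
have mS : measurable S by exact: measurable_level_density_gt.
rewrite -(setUIDK B S) numax ?ge_max; last 2 first.
- exact: measurableI.
- exact: measurableD.
apply/andP; split; last by apply: nu_level_density_le => //; rewrite /t; lra.
have [G [mG BSG tG]] : tau_negligible tau (B `&` S).
  by apply: (ess_sup_on_le_negligible (c := c)); [rewrite es | rewrite /t; lra].
apply: le_trans (sigma_maxitive_le hnu (measurableI _ _ mB mS) mG BSG) _.
by rewrite hac // lee_fin; lra.
Qed.

Lemma rel_density_level_density : rel_density nu tau level_density.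
Proof.
split; first exact: Bmeasurable_level_density.
by move=> B mB; apply/le_anti/andP; split;
  [exact: le_ess_sup_level_density | exact: ess_sup_level_density_le].
Qed.

End density_exists.

Lemma abs_cont_strong_abs_cont {d : measure_display} {T : measurableType d}
    {R : realType} (nu tau : set T -> \bar R) :
  sigma_maxitive nu -> sigma_principal tau ->
  abs_cont nu tau -> strong_abs_cont nu tau.
Proof.
move=> hnu hprin hac.
have /choice[L hL] q : exists L, sublevel_ideal nu q L /\
    forall S, sublevel_ideal nu q S -> tau_negligible tau (S `\` L).
  by have [L ? ?] := hprin _ (sigma_ideal_sublevel hnu q); exists L.
exists (level_density L).
exact: rel_density_level_density (fun q => (hL q).1) (fun q => (hL q).2) hac.
Qed.

Theorem corollary5p6 (d : measure_display) (T : measurableType d) (R : realType)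
  (hE : inhabited T) (nu tau : set T -> \bar R) :
  sigma_maxitive nu -> sigma_maxitive tau -> sigma_principal tau ->
  (abs_cont nu tau <-> strong_abs_cont nu tau) /\
  (forall f g : T -> \bar R, rel_density nu tau f -> rel_density nu tau g ->
     tau_negligible tau [set x | f x <> g x]).
Proof.
move=> hnu htau hprin; split.
  split; first exact: abs_cont_strong_abs_cont.
  exact: strong_abs_cont_abs_cont.
move=> f g hf hg; exact (rel_density_unique htau hf hg).
Qed.
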